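(* Let $F$ be a safe sentence and let $\mathbf c$ be a nonempty finite set of object constants containing every object constant occurring in $F$. Then $\mathrm{SM}[\mathrm{Ground}_{\mathbf c}[F]]$ is equivalent to $\mathrm{SM}[F]$ (they are satisfied by the same interpretations).
   Context: Formulas are first-order formulas over a signature with object constants, predicate constants and equality, but no function constants of arity $>0$. Primitive connectives are $\bot,\land,\lor,\rightarrow$, quantifiers $\forall,\exists$; $\neg G$ is $G\rightarrow\bot$, $\top$ is $\bot\rightarrow\bot$, $G\leftrightarrow H$ is $(G\rightarrow H)\land(H\rightarrow G)$. A sentence is a formula without free variables. Stable model operator: for a sentence $F$, let $\mathbf p=p_1,\dots,p_n$ be all predicate constants occurring in $F$ and $\mathbf u=u_1,\dots,u_n$ distinct predicate variables with matching arities. $\mathbf u\le\mathbf p$ is $\bigwedge_i\forall\mathbf x(u_i(\mathbf x)\rightarrow p_i(\mathbf x))$, $\mathbf u=\mathbf p$ is $\bigwedge_i\forall\mathbf x(u_i(\mathbf x)\leftrightarrow p_i(\mathbf x))$, $\mathbf u<\mathbf p$ is $(\mathbf u\le\mathbf p)\land\neg(\mathbf u=\mathbf p)$. $F^*(\mathbf u)$: $p_i(\mathbf t)^*=u_i(\mathbf t)$; $(t_1=t_2)^*=(t_1=t_2)$; $\bot^*=\bot$; $(G\land H)^*=G^*\land H^*$; $(G\lor H)^*=G^*\lor H^*$; $(G\rightarrow H)^*=(G^*\rightarrow H^* )\land(G\rightarrow H)$; $(\forall xG)^*=\forall xG^*$; $(\exists xG)^*=\exists xG^*$. $\mathrm{SM}[F]$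 is $F\land\neg\exists\mathbf u((\mathbf u<\mathbf p)\land F^*(\mathbf u))$. Restricted variables: for quantifier-free $G$, $\mathrm{RV}(G)$ is: $\emptyset$ if $G$ is an equality between two variables; the set of variables of $G$ if $G$ is any other atomic formula; $\mathrm{RV}(\bot)=\emptyset$; $\mathrm{RV}(G\land H)=\mathrm{RV}(G)\cup\mathrm{RV}(H)$; $\mathrm{RV}(G\lor H)=\mathrm{RV}(G)\cap\mathrm{RV}(H)$; $\mathrm{RV}(G\rightarrow H)=\emptyset$. An occurrence of a subformula or variable is positive if the number of implications containing it in their antecedent is even, negative otherwise, and strictly positive if it is in the antecedent of no implication. A prenex sentence $Q_1x_1\cdots Q_nx_nM$ ($M$ quantifier-free, $x_i$ distinct) is semi-safe if every strictly positive occurrence of every $x_i$ in $M$ belongs to a subformula $G\rightarrow H$ with $x_i\in\mathrm{RV}(G)$. Simplification transformations: $\neg\bot\mapsto\top$, $\neg\top\mapsto\bot$; $\bot\land G\mapsto\bot$, $G\land\bot\mapsto\bot$, $\top\land G\mapsto G$, $G\land\top\mapsto G$; $\bot\lor G\mapsto G$, $G\lor\bot\mapsto G$, $\top\lor G\mapsto\top$, $G\lor\top\mapsto\top$; $\bot\rightarrow G\mapsto\top$, $G\rightarrow\top\mapsto\top$, $\top\rightarrow G\mapsto G$. A variable $x$ is positively (resp. negatively) weakly restricted in a quantifier-free formula $G$ if the formula obtained from $G$ by first replacing every atomic formula $A$ of $G$ with $x\in\mathrm{RV}(A)$ by $\bot$ and then applying the simplification transformations is $\top$ (resp. $\bot$).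 A semi-safe prenex sentence $Q_1x_1\cdots Q_nx_nM$ is safe if for every occurrence of every variable $x_i$: (a) if $Q_i=\forall$, the occurrence belongs to a positive subformula (of the sentence) in which $x_i$ is positively weakly restricted, or to a negative subformula in which $x_i$ is negatively weakly restricted; (b) if $Q_i=\exists$, the occurrence belongs to a negative subformula in which $x_i$ is positively weakly restricted, or to a positive subformula in which $x_i$ is negatively weakly restricted. Grounding: for a prenex sentence $F$ and nonempty finite set $\mathbf c$ of object constants, $\mathrm{Ground}_{\mathbf c}[F]$ is $F$ if $F$ is quantifier-free; $\mathrm{Ground}_{\mathbf c}[\forall xG(x)]=\bigwedge_{c\in\mathbf c}\mathrm{Ground}_{\mathbf c}[G(c)]$; $\mathrm{Ground}_{\mathbf c}[\exists xG(x)]=\bigvee_{c\in\mathbf c}\mathrm{Ground}_{\mathbf c}[G(c)]$. *)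

From Stdlib Require Import List Bool Arith.
Import ListNotations.
Set Implicit Arguments.

(* Object variables and object constants are named by natural numbers;
   predicate constants are named by natural numbers together with their
   arity (the length of the argument list). *)
Inductive term : Type :=
| Var (x : nat)
| Cst (c : nat).

Inductive form (P : Type) : Type :=
| FBot : form P
| FAtom : P -> list term -> form P
| FEq : term -> term -> form P
| FAnd : form P -> form P -> form P
| FOr : form P -> form P -> form P
| FImp : form P -> form P -> form P
| FAll : nat -> form P -> form P
| FEx : nat -> form P -> form P.
Arguments FBot {P}.
Arguments FEq {P}.

Definition FNeg {P} (G : form P) : form P := FImp G FBot.
Definition FTop {P} : form P := FImp FBot FBot.

Definition term_is_var (x : nat) (t : term) : bool :=
  match t with Var y => Nat.eqb x y | Cst _ => false end.

Definition term_vars (t : term) : list nat :=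
  match t with Var y => [y] | Cst _ => [] end.
Definition term_consts (t : term) : list nat :=
  match t with Var _ => [] | Cst c => [c] end.

Fixpoint fv {P} (F : form P) : list nat :=
  match F with
  | FBot => []
  | FAtom _ ts => flat_map term_vars ts
  | FEq t1 t2 => term_vars t1 ++ term_vars t2
  | FAnd G H | FOr G H | FImp G H => fv G ++ fv H
  | FAll x G | FEx x G => filter (fun y => negb (Nat.eqb x y)) (fv G)
  end.

Definition sentence {P} (F : form P) : Prop := fv F = [].

Fixpoint consts {P} (F : form P) : list nat :=
  match F with
  | FBot => []
  | FAtom _ ts => flat_map term_consts ts
  | FEq t1 t2 => term_consts t1 ++ term_consts t2
  | FAnd G H | FOr G H | FImp G H => consts G ++ consts H
  | FAll _ G | FEx _ G => consts G
  end.

Fixpoint preds (F : form nat) : list (nat * nat) :=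
  match F with
  | FBot | FEq _ _ => []
  | FAtom p ts => [(p, length ts)]
  | FAnd G H | FOr G H | FImp G H => preds G ++ preds H
  | FAll _ G | FEx _ G => preds G
  end.

Fixpoint qfree {P} (F : form P) : bool :=
  match F with
  | FBot | FAtom _ _ | FEq _ _ => true
  | FAnd G H | FOr G H | FImp G H => qfree G && qfree H
  | FAll _ _ | FEx _ _ => false
  end.

Fixpoint map_preds {P Q} (f : P -> Q) (F : form P) : form Q :=
  match F with
  | FBot => FBot
  | FAtom p ts => FAtom (f p) ts
  | FEq t1 t2 => FEq t1 t2
  | FAnd G H => FAnd (map_preds f G) (map_preds f H)
  | FOr G H => FOr (map_preds f G) (map_preds f H)
  | FImp G H => FImp (map_preds f G) (map_preds f H)
  | FAll x G => FAll x (map_preds f G)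
  | FEx x G => FEx x (map_preds f G)
  end.

(* An interpretation: a nonempty domain D (nonemptiness is a hypothesis of
   the theorem), values of object constants, and extents of predicate
   constants (a predicate of arity n is read on lists of length n). *)
Record interp (D : Type) : Type := Interp {
  ic : nat -> D;
  ip : nat -> list D -> Prop }.

Definition upd {D} (v : nat -> D) (x : nat) (d : D) : nat -> D :=
  fun y => if Nat.eqb x y then d else v y.

Definition eval_term {D} (c : nat -> D) (v : nat -> D) (t : term) : D :=
  match t with Var x => v x | Cst k => c k end.

Fixpoint sat {P D} (c : nat -> D) (r : P -> list D -> Prop) (v : nat -> D)
  (F : form P) : Prop :=
  match F with
  | FBot => False
  | FAtom p ts => r p (map (eval_term c v) ts)
  | FEq t1 t2 => eval_term c v t1 = eval_term c v t2
  | FAnd G H => sat c r v G /\ sat c r v H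
  | FOr G H => sat c r v G \/ sat c r v H
  | FImp G H => sat c r v G -> sat c r v H
  | FAll x G => forall d : D, sat c r (upd v x d) G
  | FEx x G => exists d : D, sat c r (upd v x d) G
  end.

Definition models {D} (I : interp D) (F : form nat) : Prop :=
  forall v : nat -> D, sat (ic I) (ip I) v F.

(* F*(u): formulas over predicate symbols  inl p  (the constant p) and
   inr p  (the predicate variable u_p of the same arity as p). *)
Fixpoint star (F : form nat) : form (nat + nat) :=
  match F with
  | FBot => FBot
  | FAtom p ts => FAtom (inr p) ts
  | FEq t1 t2 => FEq t1 t2
  | FAnd G H => FAnd (star G) (star H)
  | FOr G H => FOr (star G) (star H)
  | FImp G H => FAnd (FImp (star G) (star H))
                     (FImp (map_preds inl G) (map_preds inl H))
  | FAll x G => FAll x (star G)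
  | FEx x G => FEx x (star G)
  end.

Definition le_on {D} (ps : list (nat * nat)) (U R : nat -> list D -> Prop) : Prop :=
  forall p n, In (p, n) ps -> forall l : list D, length l = n -> U p l -> R p l.
Definition eq_on {D} (ps : list (nat * nat)) (U R : nat -> list D -> Prop) : Prop :=
  forall p n, In (p, n) ps -> forall l : list D, length l = n -> (U p l <-> R p l).
Definition lt_on {D} (ps : list (nat * nat)) (U R : nat -> list D -> Prop) : Prop :=
  le_on ps U R /\ ~ eq_on ps U R.

Definition with_vars {D} (R U : nat -> list D -> Prop) : nat + nat -> list D -> Prop :=
  fun s => match s with inl p => R p | inr p => U p end.

(* I |= SM[F] :  F /\ ~ exists u ((u < p) /\ F*(u)),
   the second-order quantifier ranging over all relations on the domain. *)
Definition models_SM {D} (I : interp D) (F : form nat) : Prop :=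
  models I F /\
  ~ (exists U : nat -> list D -> Prop,
        lt_on (preds F) U (ip I) /\
        forall v : nat -> D, sat (ic I) (with_vars (ip I) U) v (star F)).

Definition occ_term (x : nat) (t : term) : bool := term_is_var x t.

Fixpoint in_RV (x : nat) (G : form nat) : bool :=
  match G with
  | FBot => false
  | FAtom _ ts => existsb (occ_term x) ts
  | FEq t1 t2 =>
      match t1, t2 with
      | Var _, Var _ => false
      | _, _ => occ_term x t1 || occ_term x t2
      end
  | FAnd G H => in_RV x G || in_RV x H
  | FOr G H => in_RV x G && in_RV x H
  | FImp _ _ => false
  | FAll _ _ | FEx _ _ => false
  end.

Definition is_bot (F : form nat) : bool :=
  match F with FBot => true | _ => false end.
Definition is_top (F : form nat) : bool :=
  match F with FImp FBot FBot => true | _ => false end.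

(* exhaustive (bottom-up) application of the simplification transformations *)
Fixpoint simp (F : form nat) : form nat :=
  match F with
  | FAnd G H =>
      let G' := simp G in let H' := simp H in
      if is_bot G' then FBot else if is_bot H' then FBot
      else if is_top G' then H' else if is_top H' then G'
      else FAnd G' H'
  | FOr G H =>
      let G' := simp G in let H' := simp H in
      if is_bot G' then H' else if is_bot H' then G'
      else if is_top G' then FTop else if is_top H' then FTop
      else FOr G' H'
  | FImp G H =>
      let G' := simp G in let H' := simp H in
      if is_bot G' then FTop else if is_top H' then FTop
      else if is_top G' then H'
      else FImp G' H'
  | FAll x G => FAll x (simp G)
  | FEx x G => FEx x (simp G)
  | _ => F
  end.

Fixpoint repl_RV (x : nat) (F : form nat) : form nat :=
  match F with
  | FBot => FBot
  | FAtom _ _ | FEq _ _ => if in_RV x F then FBot else F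
  | FAnd G H => FAnd (repl_RV x G) (repl_RV x H)
  | FOr G H => FOr (repl_RV x G) (repl_RV x H)
  | FImp G H => FImp (repl_RV x G) (repl_RV x H)
  | FAll y G => FAll y (repl_RV x G)
  | FEx y G => FEx y (repl_RV x G)
  end.

Definition pos_weakly_restricted (x : nat) (G : form nat) : bool :=
  is_top (simp (repl_RV x G)).
Definition neg_weakly_restricted (x : nat) (G : form nat) : bool :=
  is_bot (simp (repl_RV x G)).

Fixpoint prefix_matrix (F : form nat) : list (bool * nat) * form nat :=
  match F with
  | FAll x G => let (pre, M) := prefix_matrix G in ((true, x) :: pre, M)
  | FEx x G => let (pre, M) := prefix_matrix G in ((false, x) :: pre, M)
  | _ => ([], F)
  end.

Definition atom_contains (x : nat) (F : form nat) : bool :=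
  match F with
  | FAtom _ ts => existsb (occ_term x) ts
  | FEq t1 t2 => occ_term x t1 || occ_term x t2
  | _ => false
  end.

(* every strictly positive occurrence of x in M belongs to a subformula
   G -> H with x \in RV(G) *)
Fixpoint sp_covered (x : nat) (M : form nat) : bool :=
  match M with
  | FBot => true
  | FAtom _ _ | FEq _ _ => negb (atom_contains x M)
  | FAnd G H | FOr G H => sp_covered x G && sp_covered x H
  | FImp G H => in_RV x G || sp_covered x H
  | FAll _ G | FEx _ G => sp_covered x G
  end.

(* condition (a)/(b) for a subformula S of polarity pol (true = positive) *)
Definition good_subformula (q : bool) (x : nat) (pol : bool) (S : form nat) : bool :=
  if q then (pol && pos_weakly_restricted x S) || (negb pol && neg_weakly_restricted x S)
  else (negb pol && pos_weakly_restricted x S) || (pol && neg_weakly_restricted x S).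

(* every occurrence of x in S belongs to some good subformula; [cov] records
   whether an enclosing subformula is already good; [pol] is the polarity of S *)
Fixpoint occ_safe (q : bool) (x : nat) (pol cov : bool) (S : form nat) : bool :=
  let cov' := cov || good_subformula q x pol S in
  match S with
  | FBot => true
  | FAtom _ _ | FEq _ _ => implb (atom_contains x S) cov'
  | FAnd G H | FOr G H => occ_safe q x pol cov' G && occ_safe q x pol cov' H
  | FImp G H => occ_safe q x (negb pol) cov' G && occ_safe q x pol cov' H
  | FAll _ G | FEx _ G => occ_safe q x pol cov' G
  end.

Definition semi_safe (F : form nat) : Prop :=
  let (pre, M) := prefix_matrix F in
  sentence F /\ qfree M = true /\ NoDup (map snd pre) /\
  forall q x, In (q, x) pre -> sp_covered x M = true.

Definition safe (F : form nat) : Prop :=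
  semi_safe F /\
  let (pre, M) := prefix_matrix F in
  forall q x, In (q, x) pre -> occ_safe q x true false M = true.

Fixpoint bigAnd (l : list (form nat)) : form nat :=
  match l with
  | [] => FTop
  | [G] => G
  | G :: l' => FAnd G (bigAnd l')
  end.
Fixpoint bigOr (l : list (form nat)) : form nat :=
  match l with
  | [] => FBot
  | [G] => G
  | G :: l' => FOr G (bigOr l')
  end.

Definition subst_term (s : list (nat * nat)) (t : term) : term :=
  match t with
  | Var x => match find (fun p => Nat.eqb x (fst p)) s with
             | Some (_, c) => Cst c | None => Var x end
  | Cst c => Cst c
  end.

Fixpoint subst (s : list (nat * nat)) (F : form nat) : form nat :=
  match F with
  | FBot => FBot
  | FAtom p ts => FAtom p (map (subst_term s) ts)
  | FEq t1 t2 => FEq (subst_term s t1) (subst_term s t2)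
  | FAnd G H => FAnd (subst s G) (subst s H)
  | FOr G H => FOr (subst s G) (subst s H)
  | FImp G H => FImp (subst s G) (subst s H)
  | FAll x G => FAll x (subst (filter (fun p => negb (Nat.eqb x (fst p))) s) G)
  | FEx x G => FEx x (subst (filter (fun p => negb (Nat.eqb x (fst p))) s) G)
  end.

(* ground_aux cs s F = Ground_cs[F s] for a prenex F *)
Fixpoint ground_aux (cs : list nat) (s : list (nat * nat)) (F : form nat) : form nat :=
  match F with
  | FAll x G => bigAnd (map (fun c => ground_aux cs ((x, c) :: s) G) cs)
  | FEx x G => bigOr (map (fun c => ground_aux cs ((x, c) :: s) G) cs)
  | _ => subst s F
  end.

Definition Ground (cs : list nat) (F : form nat) : form nat := ground_aux cs [] F.

From Stdlib Require Import List Bool Arith Classical FunctionalExtensionality.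
Import ListNotations.

(* Let H be the set of values of the constants in [cs].  In a stable model of F, or of its
   grounding, every extent consists of tuples from H: by semi-safety, restricting the
   predicate variables to such tuples still satisfies the star of the formula, so
   minimality forces it.  For extents (and predicate variables) bounded by H, safety makes
   every quantifier relativizable to H, because giving a universally (existentially)
   quantified variable a value outside H can only make the matrix and its star true
   (false): the atoms restricting it become false.  Relativized to H, the quantifiers are
   exactly the conjunctions and disjunctions of the grounding, so F and Ground F, and
   likewise their stars, agree whenever the extents are bounded by H; this transfers both
   conditions of SM from one formula to the other. *)

Lemma upd_same {D} (v : nat -> D) x d : upd v x d x = d.
Proof. unfold upd; rewrite Nat.eqb_refl; reflexivity. Qed.

Lemma upd_other {D} (v : nat -> D) x d y : x <> y -> upd v x d y = v y.
Proof. unfold upd; intros Hxy; apply Nat.eqb_neq in Hxy; rewrite Hxy; reflexivity. Qed.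

Lemma upd_comm {D} (v : nat -> D) x y a b :
  x <> y -> upd (upd v x a) y b = upd (upd v y b) x a.
Proof.
  intros Hxy; apply functional_extensionality; intros z; unfold upd.
  destruct (Nat.eqb_spec y z), (Nat.eqb_spec x z); congruence.
Qed.

Fixpoint quantify {P} (pre : list (bool * nat)) (M : form P) : form P :=
  match pre with
  | [] => M
  | (q, x) :: pre' => if q then FAll x (quantify pre' M) else FEx x (quantify pre' M)
  end.

Lemma prefix_matrix_quantify F pre M : prefix_matrix F = (pre, M) -> F = quantify pre M.
Proof.
  revert pre M; induction F; simpl; intros pre M E; try (injection E; intros; subst; reflexivity).
  all: destruct (prefix_matrix F) as [pre' M']; injection E; intros; subst; simpl; f_equal; auto.
Qed.

Lemma star_quantify pre M : star (quantify pre M) = quantify pre (star M).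
Proof. induction pre as [|[[|] x] pre IH]; simpl; rewrite ?IH; reflexivity. Qed.

Lemma preds_quantify pre M : preds (quantify pre M) = preds M.
Proof. induction pre as [|[[|] x] pre IH]; simpl; auto. Qed.

Lemma consts_quantify pre (M : form nat) : consts (quantify pre M) = consts M.
Proof. induction pre as [|[[|] x] pre IH]; simpl; auto. Qed.

Lemma fv_quantify pre (M : form nat) x :
  In x (fv M) -> In x (map snd pre) \/ In x (fv (quantify pre M)).
Proof.
  induction pre as [|[q y] pre IH]; simpl; auto; intros Hx.
  destruct (IH Hx) as [Hin | Hin]; auto.
  destruct (Nat.eqb_spec y x) as [<- | Hyx]; auto.
  right; destruct q; apply filter_In; split; auto.
  all: apply Nat.eqb_neq in Hyx; rewrite Hyx; reflexivity.
Qed.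

Fixpoint sat_prefix {D} (dom : D -> Prop) (pre : list (bool * nat))
  (phi : (nat -> D) -> Prop) (v : nat -> D) : Prop :=
  match pre with
  | [] => phi v
  | (q, x) :: pre' =>
      if q then forall d, dom d -> sat_prefix dom pre' phi (upd v x d)
      else exists d, dom d /\ sat_prefix dom pre' phi (upd v x d)
  end.

Lemma sat_quantify {P D} (c : nat -> D) (r : P -> list D -> Prop) pre M v :
  sat c r v (quantify pre M) <-> sat_prefix (fun _ => True) pre (fun w => sat c r w M) v.
Proof.
  revert v; induction pre as [|[[|] x] pre IH]; simpl; intros v.
  - reflexivity.
  - split; intros H d; [intros _|]; apply IH, H; exact I.
  - split; intros [d Hd]; exists d; [split; [exact I|]|]; apply IH, Hd.
Qed.

Lemma sat_prefix_ext {D} (dom : D -> Prop) pre (phi psi : (nat -> D) -> Prop) :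
  (forall w, phi w <-> psi w) -> forall v, sat_prefix dom pre phi v <-> sat_prefix dom pre psi v.
Proof.
  intros Hext; induction pre as [|[[|] x] pre IH]; simpl; intros v.
  - apply Hext.
  - split; intros H d Hd; apply IH; auto.
  - split; intros [d [Hd H]]; exists d; split; auto; apply IH; auto.
Qed.

Lemma sat_prefix_transport {D} (dom : D -> Prop) pre phi x a b :
  ~ In x (map snd pre) -> (forall w, phi (upd w x a) -> phi (upd w x b)) ->
  forall v, sat_prefix dom pre phi (upd v x a) -> sat_prefix dom pre phi (upd v x b).
Proof.
  intros Hx Hphi; induction pre as [|[q y] pre IH]; simpl in *; intros v; auto.
  assert (Hxy : x <> y) by auto.
  destruct q.
  - intros H d Hd; specialize (H d Hd).
    rewrite upd_comm in H |- * by auto; apply IH; auto.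
  - intros [d [Hd H]]; exists d; split; auto.
    rewrite upd_comm in H |- * by auto; apply IH; auto.
Qed.

(* A universal (existential) quantifier may be relativized to a nonempty [dom] when a
   value outside [dom] makes the matrix easiest (hardest) to satisfy. *)
Lemma sat_prefix_relativize {D} (dom : D -> Prop) (pre : list (bool * nat))
  (phi : (nat -> D) -> Prop) :
  NoDup (map snd pre) -> (exists d0, dom d0) ->
  (forall q x, In (q, x) pre -> forall w d d', ~ dom d ->
     if q then phi (upd w x d') -> phi (upd w x d) else phi (upd w x d) -> phi (upd w x d')) ->
  forall v, sat_prefix (fun _ => True) pre phi v <-> sat_prefix dom pre phi v.
Proof.
  intros Hnd [d0 Hd0]; induction pre as [|[q x] pre IH]; simpl; intros Hout v; [reflexivity|].
  inversion Hnd as [|? ? Hx Hnd']; subst.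
  assert (IH' : forall v, sat_prefix (fun _ => True) pre phi v <-> sat_prefix dom pre phi v)
    by (apply IH; auto; intros; eapply Hout; eauto).
  pose proof (Hout q x (or_introl eq_refl)) as Hout_x.
  destruct q; cbn in Hout_x; split.
  - intros H d _; apply IH', H; exact I.
  - intros H d _; apply IH'.
    destruct (classic (dom d)) as [Hd | Hd]; auto.
    apply (sat_prefix_transport dom pre phi x d0 d Hx); [intros w; apply Hout_x, Hd | apply H, Hd0].
  - intros [d [_ H]]; apply IH' in H.
    destruct (classic (dom d)) as [Hd | Hd]; eauto.
    exists d0; split; auto.
    apply (sat_prefix_transport dom pre phi x d d0 Hx); [intros w; apply Hout_x, Hd | exact H].
  - intros [d [Hd H]]; exists d; split; [exact I|]; apply IH'; auto.
Qed.

Lemma sat_map_preds {P Q D} (c : nat -> D) (f : P -> Q) (r : Q -> list D -> Prop) G v :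
  sat c r v (map_preds f G) <-> sat c (fun p => r (f p)) v G.
Proof.
  revert v; induction G; simpl; intros v; try tauto.
  - rewrite IHG1, IHG2; tauto.
  - rewrite IHG1, IHG2; tauto.
  - rewrite IHG1, IHG2; tauto.
  - split; intros H d; apply IHG, H.
  - split; intros [d H]; exists d; apply IHG, H.
Qed.

Lemma sat_map_inl {D} (c : nat -> D) (R U : nat -> list D -> Prop) G v :
  sat c (with_vars R U) v (map_preds inl G) <-> sat c R v G.
Proof. exact (sat_map_preds c inl (with_vars R U) G v). Qed.

Lemma sat_preds_ext {D} (c : nat -> D) (X : form nat) (R1 R2 : nat -> list D -> Prop) :
  (forall p l, In (p, length l) (preds X) -> (R1 p l <-> R2 p l)) ->
  forall v, sat c R1 v X <-> sat c R2 v X.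
Proof.
  induction X; simpl; intros Hag v; try tauto.
  - apply Hag; rewrite length_map; left; reflexivity.
  - rewrite IHX1, IHX2; [tauto | intros; apply Hag, in_or_app; auto ..].
  - rewrite IHX1, IHX2; [tauto | intros; apply Hag, in_or_app; auto ..].
  - rewrite IHX1, IHX2; [tauto | intros; apply Hag, in_or_app; auto ..].
  - split; intros H d; apply (IHX Hag), H.
  - split; intros [d H]; exists d; apply (IHX Hag), H.
Qed.

Lemma sat_star_preds_ext {D} (c : nat -> D) (X : form nat) (R1 U1 R2 U2 : nat -> list D -> Prop) :
  (forall p l, In (p, length l) (preds X) -> (R1 p l <-> R2 p l) /\ (U1 p l <-> U2 p l)) ->
  forall v, sat c (with_vars R1 U1) v (star X) <-> sat c (with_vars R2 U2) v (star X).
Proof.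
  induction X; simpl; intros Hag v; try tauto.
  - apply Hag; rewrite length_map; left; reflexivity.
  - rewrite IHX1, IHX2; [tauto | intros; apply Hag, in_or_app; auto ..].
  - rewrite IHX1, IHX2; [tauto | intros; apply Hag, in_or_app; auto ..].
  - rewrite IHX1, IHX2, !sat_map_inl, (sat_preds_ext c X1 R1 R2), (sat_preds_ext c X2 R1 R2);
      [tauto | intros; apply Hag, in_or_app; auto ..].
  - split; intros H d; apply (IHX Hag), H.
  - split; intros [d H]; exists d; apply (IHX Hag), H.
Qed.

Lemma sat_star_le {D} (c : nat -> D) (R U : nat -> list D -> Prop) :
  (forall p l, U p l -> R p l) -> forall G v, sat c (with_vars R U) v (star G) -> sat c R v G.
Proof.
  intros HUR G; induction G; simpl; intros v.
  - tauto.
  - apply HUR.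
  - tauto.
  - intros [H1 H2]; auto.
  - intros [H1 | H2]; auto.
  - intros [_ H]; rewrite !sat_map_inl in H; exact H.
  - intros H d; auto.
  - intros [d H]; eauto.
Qed.

(* Classical satisfaction is the case [u = p] of [star]; the lemmas below are stated for
   [star] and specialized to classical satisfaction through this. *)
Lemma sat_star_diag {D} (c : nat -> D) (R : nat -> list D -> Prop) G v :
  sat c (with_vars R R) v (star G) <-> sat c R v G.
Proof.
  split; [apply sat_star_le; auto|].
  revert v; induction G; simpl; intros v; try tauto.
  - intros [H1 H2]; auto.
  - intros [H1 | H2]; auto.
  - intros H; rewrite !sat_map_inl; split; auto.
    intros H1; apply IHG2, H, (sat_star_le c R R (fun _ _ h => h)), H1.
  - intros H d; auto.
  - intros [d H]; eauto.
Qed.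

Lemma is_bot_eq G : is_bot G = true -> G = FBot.
Proof. destruct G; simpl; congruence. Qed.

Lemma is_top_eq G : is_top G = true -> G = FTop.
Proof. destruct G as [| | | | | [] [] | |]; simpl; congruence || reflexivity. Qed.

Ltac case_simp :=
  repeat match goal with
  | |- context [is_bot ?G] =>
      let E := fresh "E" in destruct (is_bot G) eqn:E; [apply is_bot_eq in E; rewrite E in *|]
  | |- context [is_top ?G] =>
      let E := fresh "E" in destruct (is_top G) eqn:E; [apply is_top_eq in E; rewrite E in *|]
  end.

Lemma sat_star_simp {D} (c : nat -> D) S (R U : nat -> list D -> Prop) :
  (forall p l, U p l -> R p l) ->
  forall v, sat c (with_vars R U) v (star (simp S)) <-> sat c (with_vars R U) v (star S).
Proof.
  revert U; induction S; intros U HUR v; try (simpl; tauto).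
  - pose proof (IHS1 U HUR v); pose proof (IHS2 U HUR v); simpl; case_simp; simpl in *; tauto.
  - pose proof (IHS1 U HUR v); pose proof (IHS2 U HUR v); simpl; case_simp; simpl in *; tauto.
  - pose proof (IHS1 U HUR v); pose proof (IHS2 U HUR v).
    pose proof (IHS1 R (fun _ _ h => h) v) as C1; pose proof (IHS2 R (fun _ _ h => h) v) as C2.
    rewrite !sat_star_diag in C1, C2.
    pose proof (sat_star_le c R U HUR S2 v).
    simpl; case_simp; simpl in *; rewrite ?sat_map_inl; tauto.
  - simpl; split; intros H d; apply (IHS U HUR), H.
  - simpl; split; intros [d H]; exists d; apply (IHS U HUR), H.
Qed.

Ltac split_binary Hq Hcs :=
  simpl in Hq, Hcs; apply andb_prop in Hq as [?Hq1 ?Hq2];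
  apply incl_app_inv in Hcs as [?Hcs1 ?Hcs2].

Section Bounded.

Context {D : Type} (c : nat -> D) (cs : list nat).

Definition named (d : D) : Prop := exists k, In k cs /\ c k = d.

Definition bounded (r : nat -> list D -> Prop) : Prop := forall p l, r p l -> Forall named l.

Lemma eval_unnamed_var v x ts :
  existsb (occ_term x) ts = true -> ~ named (v x) -> ~ Forall named (map (eval_term c v) ts).
Proof.
  intros Hocc Hx Hts.
  apply existsb_exists in Hocc as [[y | k] [Hin Hy]]; simpl in Hy; [|discriminate].
  apply Nat.eqb_eq in Hy; subst y.
  rewrite Forall_forall in Hts; apply Hx, Hts, in_map_iff; exists (Var x); auto.
Qed.

Lemma eval_named v ts :
  incl (flat_map term_consts ts) cs ->
  (forall y, ~ named (v y) -> existsb (occ_term y) ts = false) ->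
  Forall named (map (eval_term c v) ts).
Proof.
  intros Hcs Hvars; apply Forall_forall; intros d Hd.
  apply in_map_iff in Hd as [[y | k] [<- Hin]]; simpl.
  - apply NNPP; intros Hy; specialize (Hvars y Hy).
    enough (existsb (occ_term y) ts = true) by congruence.
    apply existsb_exists; exists (Var y); simpl; rewrite Nat.eqb_refl; auto.
  - exists k; split; auto; apply Hcs, in_flat_map; exists (Cst k); simpl; auto.
Qed.

Lemma not_sat_star_RV (R U : nat -> list D -> Prop) x G v :
  bounded U -> qfree G = true -> incl (consts G) cs -> in_RV x G = true -> ~ named (v x) ->
  ~ sat c (with_vars R U) v (star G).
Proof.
  intros HU; revert v; induction G; intros v Hq Hcs Hrv Hx; simpl in Hrv; try discriminate.
  - intros H; apply HU in H; eapply eval_unnamed_var; eauto.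
  - destruct t as [y | k], t0 as [y' | k']; simpl in *; rewrite ?orb_false_r in Hrv;
      try discriminate; apply Nat.eqb_eq in Hrv; subst; intros Heq; apply Hx.
    + exists k'; split; auto; apply Hcs; simpl; auto.
    + exists k; split; auto; apply Hcs; simpl; auto.
  - split_binary Hq Hcs; apply orb_prop in Hrv as [Hrv | Hrv]; intros [H1 H2];
      [eapply IHG1 | eapply IHG2]; eauto.
  - split_binary Hq Hcs; apply andb_prop in Hrv as [Hrv1 Hrv2]; intros [H1 | H2];
      [eapply IHG1 | eapply IHG2]; eauto.
Qed.

Lemma bounded_le (R U : nat -> list D -> Prop) :
  bounded R -> (forall p l, U p l -> R p l) -> bounded U.
Proof. intros HR HUR p l H; exact (HR p l (HUR p l H)). Qed.

Lemma sat_star_repl_RV (R U : nat -> list D -> Prop) x S v :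
  bounded R -> (forall p l, U p l -> R p l) ->
  qfree S = true -> incl (consts S) cs -> ~ named (v x) ->
  sat c (with_vars R U) v (star (repl_RV x S)) <-> sat c (with_vars R U) v (star S).
Proof.
  intros HR; revert U; induction S as [| p ts | t1 t2 | | | | |]; intros U HUR Hq Hcs Hx;
    try discriminate.
  - reflexivity.
  - cbn [repl_RV]; destruct (in_RV x (FAtom p ts)) eqn:Hrv; [|reflexivity].
    split; [intros []|]; apply (not_sat_star_RV R U x); eauto using bounded_le.
  - cbn [repl_RV]; destruct (in_RV x (FEq t1 t2)) eqn:Hrv; [|reflexivity].
    split; [intros []|]; apply (not_sat_star_RV R U x); eauto using bounded_le.
  - split_binary Hq Hcs; simpl; rewrite IHS1, IHS2; auto; reflexivity.
  - split_binary Hq Hcs; simpl; rewrite IHS1, IHS2; auto; reflexivity.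
  - split_binary Hq Hcs.
    pose proof (IHS1 R (fun _ _ h => h) Hq1 Hcs1 Hx) as C1.
    pose proof (IHS2 R (fun _ _ h => h) Hq2 Hcs2 Hx) as C2.
    rewrite !sat_star_diag in C1, C2.
    simpl; rewrite IHS1, IHS2, !sat_map_inl, C1, C2; auto; reflexivity.
Qed.

Lemma sat_star_pos_weakly_restricted (R U : nat -> list D -> Prop) x S v :
  bounded R -> (forall p l, U p l -> R p l) ->
  qfree S = true -> incl (consts S) cs -> ~ named (v x) ->
  pos_weakly_restricted x S = true -> sat c (with_vars R U) v (star S).
Proof.
  intros HR HUR Hq Hcs Hx Hpos; apply is_top_eq in Hpos.
  apply (sat_star_repl_RV R U x), sat_star_simp; auto.
  rewrite Hpos; simpl; auto.
Qed.

Lemma not_sat_star_neg_weakly_restricted (R U : nat -> list D -> Prop) x S v :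
  bounded R -> (forall p l, U p l -> R p l) ->
  qfree S = true -> incl (consts S) cs -> ~ named (v x) ->
  neg_weakly_restricted x S = true -> ~ sat c (with_vars R U) v (star S).
Proof.
  intros HR HUR Hq Hcs Hx Hneg HS; apply is_bot_eq in Hneg.
  apply (sat_star_repl_RV R U x), sat_star_simp in HS; auto.
  rewrite Hneg in HS; exact HS.
Qed.

(* For a universally quantified [x] in a positive position (or an existential one in a
   negative position), giving [x] a value outside the named elements can only make [S]
   true; in the dual positions, it can only make [S] false. *)
Lemma good_subformula_oriented (R U : nat -> list D -> Prop) q x pol S v w :
  bounded R -> (forall p l, U p l -> R p l) ->
  qfree S = true -> incl (consts S) cs -> ~ named (v x) ->
  good_subformula q x pol S = true ->
  if Bool.eqb q pol
  then sat c (with_vars R U) w (star S) -> sat c (with_vars R U) v (star S)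
  else sat c (with_vars R U) v (star S) -> sat c (with_vars R U) w (star S).
Proof.
  intros HR HUR Hq Hcs Hx Hgood; unfold good_subformula in Hgood.
  destruct q, pol; simpl in Hgood |- *; rewrite ?orb_false_r in Hgood;
    first [ intros _; exact (sat_star_pos_weakly_restricted R U x S v HR HUR Hq Hcs Hx Hgood)
          | intros H; contradict H;
            exact (not_sat_star_neg_weakly_restricted R U x S v HR HUR Hq Hcs Hx Hgood) ].
Qed.

Lemma eval_term_agree v w x t :
  occ_term x t = false -> (forall y, y <> x -> v y = w y) -> eval_term c v t = eval_term c w t.
Proof.
  destruct t as [y | k]; simpl; intros Hocc Hvw; auto.
  apply Hvw; intros ->; rewrite Nat.eqb_refl in Hocc; discriminate.
Qed.

Lemma map_eval_agree v w x ts :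
  existsb (occ_term x) ts = false -> (forall y, y <> x -> v y = w y) ->
  map (eval_term c v) ts = map (eval_term c w) ts.
Proof.
  induction ts as [|t ts IH]; simpl; intros Hocc Hvw; auto.
  apply orb_false_iff in Hocc as [Ht Hts]; f_equal; eauto using eval_term_agree.
Qed.

Lemma occ_safe_oriented (R U : nat -> list D -> Prop) q x S pol v w :
  bounded R -> (forall p l, U p l -> R p l) ->
  qfree S = true -> incl (consts S) cs -> occ_safe q x pol false S = true ->
  ~ named (v x) -> (forall y, y <> x -> v y = w y) ->
  if Bool.eqb q pol
  then sat c (with_vars R U) w (star S) -> sat c (with_vars R U) v (star S)
  else sat c (with_vars R U) v (star S) -> sat c (with_vars R U) w (star S).
Proof.
  intros HR; revert U pol; induction S as [| p ts | t1 t2 | | | | |];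
    intros U pol HUR Hq Hcs Hsafe Hx Hvw; try discriminate;
    match type of Hsafe with occ_safe _ _ _ _ ?S = true =>
      destruct (good_subformula q x pol S) eqn:Hgood end;
    try exact (good_subformula_oriented R U q x pol _ v w HR HUR Hq Hcs Hx Hgood);
    cbn [occ_safe] in Hsafe; rewrite ?Hgood in Hsafe; simpl in Hsafe.
  - destruct (Bool.eqb q pol); simpl; tauto.
  - destruct (existsb (occ_term x) ts) eqn:Hocc; [discriminate|].
    simpl; rewrite (map_eval_agree v w x ts Hocc Hvw); destruct (Bool.eqb q pol); tauto.
  - destruct (occ_term x t1) eqn:Ht1, (occ_term x t2) eqn:Ht2; try discriminate.
    simpl; rewrite (eval_term_agree v w x t1 Ht1 Hvw), (eval_term_agree v w x t2 Ht2 Hvw).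
    destruct (Bool.eqb q pol); tauto.
  - split_binary Hq Hcs; apply andb_prop in Hsafe as [Hs1 Hs2].
    pose proof (IHS1 U pol HUR Hq1 Hcs1 Hs1 Hx Hvw).
    pose proof (IHS2 U pol HUR Hq2 Hcs2 Hs2 Hx Hvw).
    simpl; destruct (Bool.eqb q pol); tauto.
  - split_binary Hq Hcs; apply andb_prop in Hsafe as [Hs1 Hs2].
    pose proof (IHS1 U pol HUR Hq1 Hcs1 Hs1 Hx Hvw).
    pose proof (IHS2 U pol HUR Hq2 Hcs2 Hs2 Hx Hvw).
    simpl; destruct (Bool.eqb q pol); tauto.
  - split_binary Hq Hcs; apply andb_prop in Hsafe as [Hs1 Hs2].
    pose proof (IHS1 U (negb pol) HUR Hq1 Hcs1 Hs1 Hx Hvw).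
    pose proof (IHS2 U pol HUR Hq2 Hcs2 Hs2 Hx Hvw).
    pose proof (IHS1 R (negb pol) (fun _ _ h => h) Hq1 Hcs1 Hs1 Hx Hvw) as C1.
    pose proof (IHS2 R pol (fun _ _ h => h) Hq2 Hcs2 Hs2 Hx Hvw) as C2.
    destruct q, pol; simpl in *; rewrite !sat_map_inl; rewrite !sat_star_diag in C1, C2; tauto.
Qed.

(* Semi-safety: an unnamed variable occurs strictly positively only below antecedents
   that restrict it, and these are false once the predicate variables are restricted
   to named tuples. *)
Lemma sat_star_restrict (R U : nat -> list D -> Prop) M v :
  (forall p l, U p l <-> R p l /\ Forall named l) ->
  qfree M = true -> incl (consts M) cs ->
  (forall x, ~ named (v x) -> sp_covered x M = true) ->
  sat c (with_vars R U) v (star M) <-> sat c R v M.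
Proof.
  intros HU; assert (HUR : forall p l, U p l -> R p l) by (intros p l H; apply HU, H).
  assert (HUb : bounded U) by (intros p l H; apply (HU p l), H).
  induction M as [| p ts | t1 t2 | M1 IH1 M2 IH2 | M1 IH1 M2 IH2 | M1 IH1 M2 IH2 | |];
    intros Hq Hcs Hsp; try discriminate.
  - reflexivity.
  - simpl; rewrite HU.
    enough (Forall named (map (eval_term c v) ts)) by tauto.
    apply eval_named; auto; intros y Hy; apply negb_true_iff, (Hsp y Hy).
  - reflexivity.
  - split_binary Hq Hcs.
    simpl; rewrite IH1, IH2; auto; [reflexivity | ..];
      intros x Hx; specialize (Hsp x Hx); simpl in Hsp; apply andb_prop in Hsp; tauto.
  - split_binary Hq Hcs.
    simpl; rewrite IH1, IH2; auto; [reflexivity | ..];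
      intros x Hx; specialize (Hsp x Hx); simpl in Hsp; apply andb_prop in Hsp; tauto.
  - split_binary Hq Hcs; simpl; rewrite !sat_map_inl.
    destruct (classic (exists x, ~ named (v x) /\ in_RV x M1 = true)) as [[x [Hx Hrv]] | Hno].
    + pose proof (not_sat_star_RV R U x M1 v HUb Hq1 Hcs1 Hrv Hx); tauto.
    + assert (Hsp2 : forall x, ~ named (v x) -> sp_covered x M2 = true).
      { intros x Hx; specialize (Hsp x Hx); simpl in Hsp.
        apply orb_prop in Hsp as [Hrv | Hsp]; auto.
        exfalso; apply Hno; eauto. }
      pose proof (sat_star_le c R U HUR M1 v); rewrite IH2; auto; tauto.
Qed.

End Bounded.

Lemma sp_covered_not_fv M x : qfree M = true -> ~ In x (fv M) -> sp_covered x M = true.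
Proof.
  induction M as [| p ts | t1 t2 | M1 IH1 M2 IH2 | M1 IH1 M2 IH2 | M1 IH1 M2 IH2 | |];
    simpl; intros Hq Hx; try discriminate; auto.
  - apply negb_true_iff, not_true_iff_false; intros Hocc.
    apply existsb_exists in Hocc as [[y | k] [Hin Hy]]; simpl in Hy; [|discriminate].
    apply Nat.eqb_eq in Hy; subst y.
    apply Hx, in_flat_map; exists (Var x); simpl; auto.
  - destruct t1 as [y | k], t2 as [y' | k']; simpl in *;
      repeat match goal with |- context [Nat.eqb ?a ?b] => destruct (Nat.eqb_spec a b) end;
      subst; simpl; auto; exfalso; apply Hx; auto with datatypes.
  - apply andb_prop in Hq as [Hq1 Hq2]; rewrite IH1, IH2; auto; intros H; apply Hx, in_or_app; auto.
  - apply andb_prop in Hq as [Hq1 Hq2]; rewrite IH1, IH2; auto; intros H; apply Hx, in_or_app; auto.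
  - apply andb_prop in Hq as [Hq1 Hq2]; rewrite IH2, orb_true_r; auto.
    intros H; apply Hx, in_or_app; auto.
Qed.

Lemma sp_covered_all pre M :
  sentence (quantify pre M) -> qfree M = true ->
  (forall q x, In (q, x) pre -> sp_covered x M = true) -> forall x, sp_covered x M = true.
Proof.
  intros Hsent Hq Hsp x; destruct (in_dec Nat.eq_dec x (fv M)) as [Hin | Hout].
  - destruct (fv_quantify pre M x Hin) as [Hpre | Hfv].
    + apply in_map_iff in Hpre as [[q y] [<- Hin']]; eauto.
    + unfold sentence in Hsent; rewrite Hsent in Hfv; destruct Hfv.
  - apply sp_covered_not_fv; auto.
Qed.

Section Grounding.

Context {D : Type} (c : nat -> D).

Definition subst_env (s : list (nat * nat)) (v : nat -> D) : nat -> D :=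
  fun y => match find (fun p => Nat.eqb y (fst p)) s with Some (_, k) => c k | None => v y end.

Lemma subst_env_cons s x k v : subst_env ((x, k) :: s) v = upd (subst_env s v) x (c k).
Proof.
  apply functional_extensionality; intros y; unfold subst_env, upd; simpl.
  rewrite Nat.eqb_sym; destruct (Nat.eqb x y); reflexivity.
Qed.

Lemma eval_subst_term s v t : eval_term c v (subst_term s t) = eval_term c (subst_env s v) t.
Proof.
  destruct t; simpl; unfold subst_env; auto.
  destruct (find _ s) as [[? ?] |]; reflexivity.
Qed.

Lemma sat_star_subst s M : qfree M = true ->
  forall (r : nat + nat -> list D -> Prop) v,
  sat c r v (star (subst s M)) <-> sat c r (subst_env s v) (star M).
Proof.
  induction M as [| p ts | t1 t2 | M1 IH1 M2 IH2 | M1 IH1 M2 IH2 | M1 IH1 M2 IH2 | |];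
    simpl; intros Hq r v; try discriminate.
  - reflexivity.
  - rewrite map_map; erewrite map_ext; [reflexivity | apply eval_subst_term].
  - rewrite !eval_subst_term; reflexivity.
  - apply andb_prop in Hq as [Hq1 Hq2]; rewrite IH1, IH2; auto; reflexivity.
  - apply andb_prop in Hq as [Hq1 Hq2]; rewrite IH1, IH2; auto; reflexivity.
  - apply andb_prop in Hq as [Hq1 Hq2].
    set (R := fun p => r (inl p)).
    pose proof (IH1 Hq1 (with_vars R R) v) as C1; pose proof (IH2 Hq2 (with_vars R R) v) as C2.
    rewrite !sat_star_diag in C1, C2.
    rewrite IH1, IH2, !sat_map_preds; auto; fold R; rewrite C1, C2; reflexivity.
Qed.

Lemma sat_star_bigAnd (r : nat + nat -> list D -> Prop) v l :
  sat c r v (star (bigAnd l)) <-> forall G, In G l -> sat c r v (star G).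
Proof.
  induction l as [| G [| G' l] IH]; simpl.
  - split; [intros _ G []| intros _; split; auto].
  - split; [intros H G0 [<- | []]; exact H | intros H; apply H; auto].
  - simpl in IH; rewrite IH; split; [intros [H1 H2] G0 [<- | HG0]; auto | intros H; split; auto].
Qed.

Lemma sat_star_bigOr (r : nat + nat -> list D -> Prop) v l :
  sat c r v (star (bigOr l)) <-> exists G, In G l /\ sat c r v (star G).
Proof.
  induction l as [| G [| G' l] IH]; simpl.
  - split; [intros [] | intros [G [[] _]]].
  - split; [intros H; exists G; auto | intros [G0 [[<- | []] H]]; exact H].
  - simpl in IH; rewrite IH; split.
    + intros [H | [G0 [HG0 H]]]; eauto.
    + intros [G0 [[<- | HG0] H]]; eauto.
Qed.

Lemma sat_star_ground_aux cs (r : nat + nat -> list D -> Prop) M :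
  qfree M = true -> forall pre s v,
  sat c r v (star (ground_aux cs s (quantify pre M))) <->
  sat_prefix (named c cs) pre (fun w => sat c r w (star M)) (subst_env s v).
Proof.
  intros Hq pre; induction pre as [| [[|] x] pre IH]; intros s v.
  - cbn [quantify sat_prefix]; replace (ground_aux cs s M) with (subst s M)
      by (destruct M; simpl in Hq; try discriminate; reflexivity).
    apply sat_star_subst; exact Hq.
  - simpl; rewrite sat_star_bigAnd; split.
    + intros H d [k [Hk <-]]; rewrite <- subst_env_cons; apply IH, H, in_map_iff; eauto.
    + intros H G HG; apply in_map_iff in HG as [k [<- Hk]].
      apply IH; rewrite subst_env_cons; apply H; exists k; auto.
  - simpl; rewrite sat_star_bigOr; split.
    + intros [G [HG H]]; apply in_map_iff in HG as [k [<- Hk]].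
      apply IH in H; rewrite subst_env_cons in H; exists (c k); split; auto; exists k; auto.
    + intros [d [[k [Hk <-]] H]]; exists (ground_aux cs ((x, k) :: s) (quantify pre M)).
      split; [apply in_map_iff; eauto|]; apply IH; rewrite subst_env_cons; exact H.
Qed.

Lemma sat_star_Ground cs (r : nat + nat -> list D -> Prop) pre M v :
  qfree M = true ->
  sat c r v (star (Ground cs (quantify pre M))) <->
  sat_prefix (named c cs) pre (fun w => sat c r w (star M)) v.
Proof. intros Hq; exact (sat_star_ground_aux cs r M Hq pre [] v). Qed.

End Grounding.

Lemma preds_subst s F : preds (subst s F) = preds F.
Proof. revert s; induction F; intros s; simpl; rewrite ?length_map, ?IHF1, ?IHF2, ?IHF; auto. Qed.

Lemma preds_bigAnd l : preds (bigAnd l) = flat_map preds l.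
Proof. induction l as [| G [| G' l] IH]; simpl in *; rewrite ?app_nil_r, ?IH; reflexivity. Qed.

Lemma preds_bigOr l : preds (bigOr l) = flat_map preds l.
Proof. induction l as [| G [| G' l] IH]; simpl in *; rewrite ?app_nil_r, ?IH; reflexivity. Qed.

Lemma preds_ground_aux cs M : cs <> [] -> qfree M = true ->
  forall pre s a, In a (preds (ground_aux cs s (quantify pre M))) <-> In a (preds M).
Proof.
  intros Hcs Hq pre; destruct cs as [| k0 cs]; [congruence|].
  induction pre as [| [q x] pre IH]; intros s a.
  - cbn [quantify]; replace (ground_aux (k0 :: cs) s M) with (subst s M)
      by (destruct M; simpl in Hq; try discriminate; reflexivity).
    rewrite preds_subst; reflexivity.
  - destruct q; cbn [quantify ground_aux]; rewrite ?preds_bigAnd, ?preds_bigOr, in_flat_map;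
      (split;
       [ intros [G [HG Ha]]; apply in_map_iff in HG as [k [<- _]]; apply IH in Ha; exact Ha
       | intros Ha; exists (ground_aux (k0 :: cs) ((x, k0) :: s) (quantify pre M));
         split; [left; reflexivity | apply IH, Ha] ]).
Qed.

Lemma sat_star_Ground_bounded {D} (c : nat -> D) cs pre M :
  cs <> [] -> NoDup (map snd pre) -> qfree M = true -> incl (consts M) cs ->
  (forall q x, In (q, x) pre -> occ_safe q x true false M = true) ->
  forall R U, bounded c cs R -> (forall p l, U p l -> R p l) ->
  forall v, sat c (with_vars R U) v (star (quantify pre M)) <->
            sat c (with_vars R U) v (star (Ground cs (quantify pre M))).
Proof.
  intros Hcs Hnd Hq Hcons Hsafe R U HR HUR v.
  rewrite star_quantify, sat_quantify, sat_star_Ground by exact Hq.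
  apply sat_prefix_relativize; auto.
  - destruct cs as [| k cs]; [congruence|]; exists (c k), k; simpl; auto.
  - intros q x Hin w d d' Hd.
    assert (Hagree : forall y, y <> x -> upd w x d y = upd w x d' y)
      by (intros y Hy; rewrite !upd_other by congruence; reflexivity).
    assert (Hunnamed : ~ named c cs (upd w x d x)) by (rewrite upd_same; exact Hd).
    pose proof (occ_safe_oriented c cs R U q x M true (upd w x d) (upd w x d')
                  HR HUR Hq Hcons (Hsafe q x Hin) Hunnamed Hagree) as Hor.
    destruct q; exact Hor.
Qed.

(* If some extent of a stable model contained an unnamed tuple, the restriction of the
   extents to named tuples would be a smaller model of [X*]. *)
Lemma bounded_of_models_SM {D} (I : interp D) cs X pre M (dom : D -> Prop) :
  qfree M = true -> incl (consts M) cs -> (forall x, sp_covered x M = true) ->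
  (forall a, In a (preds X) <-> In a (preds M)) ->
  (forall r v, sat (ic I) r v (star X) <->
               sat_prefix dom pre (fun w => sat (ic I) r w (star M)) v) ->
  models_SM I X ->
  forall p l, In (p, length l) (preds M) -> ip I p l -> Forall (named (ic I) cs) l.
Proof.
  intros Hq Hcons Hsp Hpreds HX [Hmod Hmin] p l Hin Hpl.
  apply NNPP; intros Hl; apply Hmin.
  set (U := fun p l => ip I p l /\ Forall (named (ic I) cs) l).
  exists U; split; [split|].
  - intros p' n _ l' _ [H _]; exact H.
  - intros Heq; apply Hl.
    apply (proj2 (Heq p (length l) (proj2 (Hpreds _) Hin) l eq_refl) Hpl).
  - intros v; apply HX.
    assert (Hrestrict : forall w, sat (ic I) (with_vars (ip I) U) w (star M) <->
                                  sat (ic I) (with_vars (ip I) (ip I)) w (star M)).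
    { intros w; rewrite sat_star_diag; apply (sat_star_restrict (ic I) cs); auto; reflexivity. }
    apply (sat_prefix_ext _ _ _ _ Hrestrict), HX, sat_star_diag, Hmod.
Qed.

Lemma models_SM_transfer {D} (I : interp D) (X Y : form nat) P (B : D -> Prop) :
  (forall a, In a (preds X) <-> In a P) -> (forall a, In a (preds Y) <-> In a P) ->
  (models_SM I X -> forall p l, In (p, length l) P -> ip I p l -> Forall B l) ->
  (forall R U, (forall p l, R p l -> Forall B l) -> (forall p l, U p l -> R p l) ->
   forall v, sat (ic I) (with_vars R U) v (star X) <-> sat (ic I) (with_vars R U) v (star Y)) ->
  models_SM I X -> models_SM I Y.
Proof.
  intros HX HY Hbnd Hequiv HSM; pose proof (Hbnd HSM) as HB; destruct HSM as [Hmod Hmin].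
  set (R := fun p l => In (p, length l) P /\ ip I p l).
  assert (HR : forall p l, R p l -> Forall B l) by (intros p l [Hin H]; exact (HB p l Hin H)).
  split.
  - intros v.
    apply (sat_preds_ext (ic I) Y R (ip I)); [intros p l Hp; apply HY in Hp; unfold R; tauto|].
    apply sat_star_diag, Hequiv, sat_star_diag; auto.
    apply (sat_preds_ext (ic I) X (ip I) R); [intros p l Hp; apply HX in Hp; unfold R; tauto|].
    apply Hmod.
  - intros [U [[Hle Hne] Hstar]]; apply Hmin.
    set (U' := fun p l => In (p, length l) P /\ U p l).
    assert (HU'R : forall p l, U' p l -> R p l)
      by (intros p l [Hp Hu]; split; auto; apply (Hle p (length l)); auto; apply HY, Hp).
    exists U; split; [split|].
    + intros p n Hp l Hl Hu; apply (Hle p n); auto; apply HY, HX, Hp.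
    + intros Heq; apply Hne; intros p n Hp l Hl; apply (Heq p n); auto; apply HX, HY, Hp.
    + intros v.
      apply (sat_star_preds_ext (ic I) X R U' (ip I) U);
        [intros p l Hp; apply HX in Hp; unfold R, U'; tauto|].
      apply Hequiv; auto.
      apply (sat_star_preds_ext (ic I) Y (ip I) U R U');
        [intros p l Hp; apply HY in Hp; unfold R, U'; tauto|].
      apply Hstar.
Qed.

Theorem proposition3 :
  forall (F : form nat) (cs : list nat),
    safe F ->
    cs <> nil -> NoDup cs ->
    (forall c, In c (consts F) -> In c cs) ->
    forall (D : Type) (I : interp D), inhabited D ->
      (models_SM I (Ground cs F) <-> models_SM I F).
Proof.
  (* Repeated constants only repeat conjuncts and disjuncts, and [D] is nonempty
     because [cs] is. *)
  intros F cs [Hsemi Hsafe] Hcs _ Hconsts D I _.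
  unfold semi_safe in Hsemi; destruct (prefix_matrix F) as [pre M] eqn:Hprenex.
  destruct Hsemi as [Hsent [Hq [Hnd Hsp]]].
  apply prefix_matrix_quantify in Hprenex; subst F.
  assert (Hcons : incl (consts M) cs)
    by (intros k Hk; apply Hconsts; rewrite consts_quantify; exact Hk).
  assert (Hsp_all : forall x, sp_covered x M = true) by (apply (sp_covered_all pre); auto).
  assert (HpF : forall a, In a (preds (quantify pre M)) <-> In a (preds M))
    by (intros a; rewrite preds_quantify; reflexivity).
  assert (HpG : forall a, In a (preds (Ground cs (quantify pre M))) <-> In a (preds M))
    by (intros a; apply preds_ground_aux; auto).
  pose proof (sat_star_Ground_bounded (ic I) cs pre M Hcs Hnd Hq Hcons Hsafe) as Hequiv.
  split; apply (models_SM_transfer I _ _ (preds M) (named (ic I) cs)); auto.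
  - apply (bounded_of_models_SM I cs _ pre M (named (ic I) cs)); auto.
    intros r v; apply sat_star_Ground, Hq.
  - intros R U HR HUR v; symmetry; apply Hequiv; auto.
  - apply (bounded_of_models_SM I cs _ pre M (fun _ => True)); auto.
    intros r v; rewrite star_quantify; apply sat_quantify.
Qed.
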